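(* Let $\Sigma$ be a closed oriented surface, $\mathbb T=\mathfrak t/\Lambda$ a compact torus and $K$ a nondegenerate symmetric bilinear form as below. For Lagrangians $L_1,L_2,L_3\subset H^1(\Sigma;\mathbb R)$ let $\mu_\Sigma(L_1,L_2,L_3)$ be their Maslov–Kashiwara index for the cup-product form $\omega_\Sigma$, and define $\mu_K(L_1,L_2,L_3):=\mu(\mathcal P_{L_1},\mathcal P_{L_2},\mathcal P_{L_3})$, the Maslov–Kashiwara index in $(H^1(\Sigma;\mathfrak t),\omega_{\Sigma,K})$ of $\mathcal P_{L_i}=L_i\otimes\mathfrak t$. Then $\mu_K(L_1,L_2,L_3)=\sigma(K)\,\mu_\Sigma(L_1,L_2,L_3)$, where $\sigma(K)$ is the signature of the real bilinear form $K$ on $\mathfrak t$.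
   Context: $K:\Lambda\times\Lambda\to\mathbb Z$ is even, integral, nondegenerate and symmetric, extended to $\mathfrak t$. $\omega_{\Sigma,K}([\alpha],[\beta])=\int_\Sigma K(\alpha\wedge\beta)$. For Lagrangians $V_1,V_2,V_3$ of a symplectic vector space $(V,\omega)$, the Maslov–Kashiwara index $\mu(V_1,V_2,V_3)$ is the signature of the quadratic form $Q(x_1,x_2,x_3)=\omega(x_1,x_2)+\omega(x_2,x_3)+\omega(x_3,x_1)$ on $V_1\oplus V_2\oplus V_3$. *)

From HB Require Import structures.
From mathcomp Require Import all_boot all_order all_algebra.
From mathcomp Require Import boolp reals.
Set Implicit Arguments. Unset Strict Implicit. Unset Printing Implicit Defensive.
Import Order.TTheory GRing.Theory Num.Theory.
Local Open Scope ring_scope.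

Section Defs.
Variable R : realType.

Definition pos_index (vT : vectType R) (D : vT -> Prop) (q : vT -> R) : nat :=
  \max_(k < (\dim (fullv : {vspace vT})).+1 |
        `[< exists U : {vspace vT}, \dim U = k /\
              (forall x, x \in U -> D x) /\
              (forall x, x \in U -> x != 0 -> 0 < q x) >]) k.

Definition signature (vT : vectType R) (D : vT -> Prop) (q : vT -> R) : int :=
  (pos_index D q)%:Z - (pos_index D (fun x => - q x))%:Z.

Definition maslov (vT : vectType R) (omega : vT -> vT -> R)
    (V1 V2 V3 : vT -> Prop) : int :=
  signature (fun x : vT * vT * vT => [/\ V1 x.1.1, V2 x.1.2 & V3 x.2])
    (fun x => omega x.1.1 x.1.2 + omega x.1.2 x.2 + omega x.2 x.1.1).

(* H^1(Sigma;R) of a closed oriented surface of genus g, in a symplectic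
   basis a_1..a_g, b_1..b_g, with the cup-product (intersection) form. *)
Definition H1 (g : nat) := 'rV[R]_(g + g).

Definition omegaSigma (g : nat) (a b : H1 g) : R :=
  \sum_(i < g) (a 0 (lshift g i) * b 0 (rshift g i)
                - a 0 (rshift g i) * b 0 (lshift g i)).

Definition lagrangian (g : nat) (L : {vspace H1 g}) : Prop :=
  (\dim L = g)%N /\ (forall x y, x \in L -> y \in L -> omegaSigma x y = 0).

(* t = R^r with lattice Lambda = Z^r; H^1(Sigma; t) = H^1(Sigma;R) (x) t,
   an element being the r-tuple (rows) of its components alpha_j along the
   basis e_j of Lambda. *)
Definition H1t (g r : nat) := 'M[R]_(r, g + g).

Definition Kreal (r : nat) (K : 'M[int]_r) : 'M[R]_r := map_mx (fun z => z%:~R) K.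

(* omega_{Sigma,K}(alpha, beta) = int_Sigma K(alpha /\ beta)
   = sum_{j,l} K(e_j,e_l) omega_Sigma(alpha_j, beta_l). *)
Definition omegaSigmaK (g r : nat) (K : 'M[int]_r) (X Y : H1t g r) : R :=
  \sum_(j < r) \sum_(l < r) Kreal K j l * omegaSigma (row j X) (row l Y).

Definition PL (g r : nat) (L : {vspace H1 g}) (X : H1t g r) : Prop :=
  forall j, row j X \in L.

Definition muSigma (g : nat) (L1 L2 L3 : {vspace H1 g}) : int :=
  maslov (@omegaSigma g) (fun x => x \in L1) (fun x => x \in L2) (fun x => x \in L3).

Definition muK (g r : nat) (K : 'M[int]_r) (L1 L2 L3 : {vspace H1 g}) : int :=
  maslov (@omegaSigmaK g r K) (@PL g r L1) (@PL g r L2) (@PL g r L3).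

Definition sigmaK (r : nat) (K : 'M[int]_r) : int :=
  signature (fun _ : 'rV[R]_r => True) (fun x => (x *m Kreal K *m x^T) 0 0).

End Defs.

From HB Require Import structures.
From mathcomp Require Import all_boot all_order all_algebra.
From mathcomp Require Import boolp reals.
From mathcomp Require Import ring lra.
Set Implicit Arguments. Unset Strict Implicit. Unset Printing Implicit Defensive.
Import Order.TTheory GRing.Theory Num.Theory.
Local Open Scope ring_scope.

(* Congruence K |-> T K T^T (T invertible) does not change mu_K: the map
   X |-> T^-T X on t-valued classes preserves every P_L and transports one
   form to the other.  A real symmetric matrix is congruent to a block
   diagonal diag(d, C) (take an anisotropic vector as first basis vector and
   eliminate), and for such a block the Maslov form on P_L1 + P_L2 + P_L3 is
   the orthogonal sum of d times the Maslov form of Sigma and the one for C.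
   Additivity of the signature over orthogonal sums (Sylvester) and induction
   on the rank of t give mu_K = sigma(K) mu_Sigma. *)

Section Signature.
Variable R : realType.

Definition hom_of (aT rT : vectType R) (f : aT -> rT) (lf : linear f) : 'Hom(aT, rT) :=
  linfun (HB.pack f (GRing.isLinear.Build _ _ _ _ f lf) : {linear aT -> rT}).

Lemma hom_ofE (aT rT : vectType R) (f : aT -> rT) (lf : linear f) x : hom_of lf x = f x.
Proof. by rewrite lfunE. Qed.

Lemma dim_rV k : \dim {: 'rV[R]_k} = k.
Proof. by rewrite dimvf /dim /= mul1n. Qed.

Definition bilinear_form (vT : vectType R) (b : vT -> vT -> R) :=
  (forall a x y z, b (a *: x + y) z = a * b x z + b y z) /\
  (forall a x y z, b z (a *: x + y) = a * b z x + b z y).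

Definition subspace_pred (vT : vectType R) (D : vT -> Prop) :=
  D 0 /\ forall a x y, D x -> D y -> D (a *: x + y).

Section PosIndex.
Variable vT : vectType R.
Implicit Types (D : vT -> Prop) (q : vT -> R) (U P : {vspace vT}).

Definition positive_subspace D q U :=
  (forall x, x \in U -> D x) /\ (forall x, x \in U -> x != 0 -> 0 < q x).

Lemma dim_leq_pos_index D q U : positive_subspace D q U -> (\dim U <= pos_index D q)%N.
Proof.
move=> hU; have hk : (\dim U < (\dim (fullv : {vspace vT})).+1)%N.
  by rewrite ltnS dimvS // subvf.
by apply: (@leq_bigmax_cond _ _ _ (Ordinal hk)); apply/asboolP; exists U.
Qed.

Lemma pos_index_witness D q : D 0 ->
  exists2 U, \dim U = pos_index D q & positive_subspace D q U.
Proof.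
move=> D0; apply: (big_ind (fun k => exists2 U, \dim U = k & positive_subspace D q U)).
- exists 0%VS; first by rewrite dimv0.
  by split=> x; rewrite memv0 => /eqP ->; rewrite ?eqxx.
- by move=> x y hx hy; rewrite /maxn; case: ifP.
- by move=> i /asboolP [U [dU hU]]; exists U.
Qed.

Lemma pos_index_leq_dimv D q : D 0 -> (pos_index D q <= \dim {:vT})%N.
Proof. by move=> D0; have [U <- _] := pos_index_witness q D0; rewrite dimvS // subvf. Qed.

Lemma pos_index_leq_ker (wT : vectType R) D q (f : 'Hom(vT, wT)) : D 0 ->
  (forall x, D x -> f x = 0 -> q x <= 0) -> (pos_index D q <= \dim {:wT})%N.
Proof.
move=> D0 fq; have [U <- [UD Upos]] := pos_index_witness q D0.
rewrite -(@limg_dim_eq _ _ _ f U); first by rewrite dimvS // subvf.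
apply/eqP; rewrite -subv0; apply/subvP => x /memv_capP [xU].
rewrite memv_ker memv0 => /eqP fx0; apply: contraT => nx.
by have := Upos x xU nx; rewrite ltNge (fq x (UD x xU) fx0).
Qed.

Lemma pos_index_eq0 D q : D 0 -> (forall x, D x -> q x <= 0) -> pos_index D q = 0%N.
Proof.
move=> D0 qD; apply/eqP; rewrite -leqn0 -(dim_rV 0).
exact: (@pos_index_leq_ker _ D q 0 D0 (fun x Dx _ => qD x Dx)).
Qed.

Lemma eq_pos_index D q q' : (forall x, D x -> (0 < q x) = (0 < q' x)) ->
  pos_index D q = pos_index D q'.
Proof.
move=> qq'; rewrite /pos_index; apply: eq_bigl => k; apply: asbool_equiv_eq.
split=> -[U [dU [UD Upos]]]; exists U; do 2!split=> //; move=> x xU nx.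
  by rewrite -qq'; [exact: Upos | exact: UD].
by rewrite qq'; [exact: Upos | exact: UD].
Qed.

Section BilinearForm.
Variable b : vT -> vT -> R.
Hypothesis hb : bilinear_form b.

Lemma form0l z : b 0 z = 0.
Proof. by have := hb.1 1 0 0 z; rewrite scale1r addr0 mul1r; lra. Qed.
Lemma form0r z : b z 0 = 0.
Proof. by have := hb.2 1 0 0 z; rewrite scale1r addr0 mul1r; lra. Qed.
Lemma formDl x y z : b (x + y) z = b x z + b y z.
Proof. by rewrite -[x]scale1r hb.1 mul1r scale1r. Qed.
Lemma formDr x y z : b z (x + y) = b z x + b z y.
Proof. by rewrite -[x]scale1r hb.2 mul1r scale1r. Qed.
Lemma formZl a x z : b (a *: x) z = a * b x z.
Proof. by rewrite -[a *: x]addr0 hb.1 form0l addr0. Qed.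
Lemma formZr a x z : b z (a *: x) = a * b z x.
Proof. by rewrite -[a *: x]addr0 hb.2 form0r addr0. Qed.
Lemma form_suml I (s : seq I) (F : I -> vT) z :
  b (\sum_(i <- s) F i) z = \sum_(i <- s) b (F i) z.
Proof. exact: (big_morph (b^~ z) (fun x y => formDl x y z) (form0l z)). Qed.
Lemma form_sumr I (s : seq I) (F : I -> vT) z :
  b z (\sum_(i <- s) F i) = \sum_(i <- s) b z (F i).
Proof. exact: (big_morph (b z) (fun x y => formDr x y z) (form0r z)). Qed.

Lemma orthogonality_map P : exists f : 'Hom(vT, 'rV[R]_(\dim P)),
  forall x, f x = 0 -> forall p, p \in P -> b p x + b x p = 0.
Proof.
pose psi x : 'rV[R]_(\dim P) := \row_i (b (vbasis P)`_i x + b x (vbasis P)`_i).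
have lpsi : linear psi by move=> a x y; apply/rowP => i; rewrite !mxE hb.1 hb.2; ring.
exists (hom_of lpsi) => x; rewrite hom_ofE => /rowP psi0 p pP.
rewrite (coord_vbasis pP) form_suml form_sumr -big_split; apply: big1 => i _.
by rewrite /= formZl formZr -mulrDr; have := psi0 i; rewrite !mxE => ->; rewrite mulr0.
Qed.

Variable D : vT -> Prop.
Hypothesis hD : subspace_pred D.

(* A vector orthogonal to a maximal positive subspace P would otherwise enlarge it. *)
Lemma orthogonal_max_positive_nonpos P :
  \dim P = pos_index D (fun x => b x x) -> positive_subspace D (fun x => b x x) P ->
  forall x, D x -> (forall p, p \in P -> b p x + b x p = 0) -> b x x <= 0.
Proof.
move=> dP [PD Ppos] x Dx orth; rewrite leNgt; apply/negP => qx.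
have xP : x \notin P by apply/negP => /orth; lra.
have x0 : x != 0 by apply: contraTneq qx => ->; rewrite form0l ltxx.
have dPx : \dim (P + <[x]>) = (\dim P).+1.
  rewrite dimv_disjoint_sum ?dim_vline ?x0 ?addn1 //.
  apply/eqP; rewrite -subv0; apply/subvP => y /memv_capP [yP /vlineP [a ya]].
  rewrite memv0 ya; have [->|a0] := eqVneq a 0; first by rewrite scale0r.
  by move: yP; rewrite ya => /(memvZ a^-1); rewrite scalerK // (negPf xP).
suff : ((\dim P).+1 <= pos_index D (fun x => b x x))%N by rewrite -dP ltnn.
rewrite -dPx; apply: dim_leq_pos_index; split=> _ /memv_addP [p pP [_ /vlineP [a ->] ->]].
  by rewrite addrC; apply: hD.2 => //; apply: PD.
have -> : b (p + a *: x) (p + a *: x) = b p p + a ^+ 2 * b x x + a * (b p x + b x p).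
  by rewrite !formDl !formDr !formZl !formZr; ring.
rewrite orth // mulr0 addr0 => npx.
have [a0|a0] := eqVneq a 0.
  by move: npx; rewrite a0 scale0r addr0 expr0n /= mul0r addr0; apply: Ppos.
have bpp : 0 <= b p p.
  by have [->|p0] := eqVneq p 0; [rewrite form0l | exact/ltW/Ppos].
have : 0 < a ^+ 2 by rewrite lt0r sqrf_eq0 a0 sqr_ge0.
nra.
Qed.

End BilinearForm.
End PosIndex.

Section OrthogonalSum.
Variables (vT1 vT2 : vectType R) (b1 : vT1 -> vT1 -> R) (b2 : vT2 -> vT2 -> R).
Variables (D1 : vT1 -> Prop) (D2 : vT2 -> Prop).
Hypotheses (hb1 : bilinear_form b1) (hb2 : bilinear_form b2).
Hypotheses (hD1 : subspace_pred D1) (hD2 : subspace_pred D2).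

Lemma pos_index_sum_leq :
  (pos_index (fun x : vT1 * vT2 => D1 x.1 /\ D2 x.2) (fun x => (b1 x.1 x.1 + b2 x.2 x.2)%R)
    <= pos_index D1 (fun x => b1 x x) + pos_index D2 (fun x => b2 x x))%N.
Proof.
have [P1 dP1 hP1] := pos_index_witness (fun x => b1 x x) hD1.1.
have [P2 dP2 hP2] := pos_index_witness (fun x => b2 x x) hD2.1.
have [f1 hf1] := orthogonality_map hb1 P1.
have [f2 hf2] := orthogonality_map hb2 P2.
pose F (x : vT1 * vT2) := (f1 x.1, f2 x.2).
have lF : linear F by move=> a x y; rewrite /F /= !linearP.
have dimF : \dim {: ('rV[R]_(\dim P1) * 'rV[R]_(\dim P2))%type} = (\dim P1 + \dim P2)%N.
  by rewrite -[in RHS](dim_rV (\dim P1)) -[in RHS](dim_rV (\dim P2)) !dimvf.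
rewrite -dP1 -dP2 -dimF; apply: (pos_index_leq_ker (f := hom_of lF)).
  by split; [exact: hD1.1 | exact: hD2.1].
move=> [x1 x2] [Dx1 Dx2]; rewrite hom_ofE => -[/hf1 o1 /hf2 o2].
have := orthogonal_max_positive_nonpos hb1 hD1 dP1 hP1 Dx1 o1.
have := orthogonal_max_positive_nonpos hb2 hD2 dP2 hP2 Dx2 o2.
rewrite /=; lra.
Qed.

Lemma pos_index_sum_geq :
  (pos_index D1 (fun x => b1 x x) + pos_index D2 (fun x => b2 x x)
    <= pos_index (fun x : vT1 * vT2 => D1 x.1 /\ D2 x.2) (fun x => (b1 x.1 x.1 + b2 x.2 x.2)%R))%N.
Proof.
have [P1 <- [P1D P1pos]] := pos_index_witness (fun x => b1 x x) hD1.1.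
have [P2 <- [P2D P2pos]] := pos_index_witness (fun x => b2 x x) hD2.1.
have lil : linear (fun x : vT1 => (x, 0 : vT2)).
  by move=> a x y; congr (_, _); rewrite /= scaler0 addr0.
have lir : linear (fun x : vT2 => (0 : vT1, x)).
  by move=> a x y; congr (_, _); rewrite /= scaler0 addr0.
pose il := hom_of lil; pose ir := hom_of lir.
have dim_img (vU : vectType R) (f : 'Hom(vU, (vT1 * vT2)%type)) (U : {vspace vU}) :
    injective f -> \dim (f @: U) = \dim U.
  by move=> /lker0P /eqP kf; rewrite limg_dim_eq // kf capv0.
have dU : \dim (il @: P1 + ir @: P2) = (\dim P1 + \dim P2)%N.
  rewrite dimv_disjoint_sum; last first.
    apply/eqP; rewrite -subv0; apply/subvP => _ /memv_capP [/memv_imgP [p1 _ ->]].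
    by move=> /memv_imgP [p2 _]; rewrite !hom_ofE => -[-> _]; rewrite memv0.
  by rewrite !dim_img // => x y; rewrite !hom_ofE => -[].
rewrite -dU; apply: dim_leq_pos_index.
split=> _ /memv_addP [_ /memv_imgP [p1 p1P ->] [_ /memv_imgP [p2 p2P ->] ->]];
  rewrite !hom_ofE /= addr0 add0r; first by split; [exact: P1D | exact: P2D].
have q2 : 0 <= b2 p2 p2.
  by have [->|n2] := eqVneq p2 0; [rewrite form0l | exact/ltW/P2pos].
have [->|n1] := eqVneq p1 0; last by have := P1pos _ p1P n1; lra.
move=> n2; suff : 0 < b2 p2 p2 by rewrite (form0l hb1); lra.
apply: P2pos => //; move: n2; apply: contra_neq => ->.
by rewrite addr0.
Qed.

Lemma pos_index_sum :
  pos_index (fun x : vT1 * vT2 => D1 x.1 /\ D2 x.2) (fun x => b1 x.1 x.1 + b2 x.2 x.2) =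
  (pos_index D1 (fun x => b1 x x) + pos_index D2 (fun x => b2 x x))%N.
Proof. by apply/eqP; rewrite eqn_leq pos_index_sum_leq pos_index_sum_geq. Qed.

End OrthogonalSum.

Lemma pos_index_leq_inj (vT wT : vectType R) (D : vT -> Prop) q (D' : wT -> Prop) q'
  (f : 'Hom(vT, wT)) : D 0 -> injective f ->
  (forall x, D x -> D' (f x)) -> (forall x, D x -> q' (f x) = q x) ->
  (pos_index D q <= pos_index D' q')%N.
Proof.
move=> D0 finj fD fq; have [P <- [PD Ppos]] := pos_index_witness q D0.
have /eqP kf : lker f == 0%VS by apply/lker0P.
rewrite -(limg_dim_eq (U := P) (f := f)) ?kf ?capv0 //.
apply: dim_leq_pos_index; split=> _ /memv_imgP [p pP ->]; first exact/fD/PD.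
rewrite fq; last exact: PD.
move=> fp0; apply: Ppos => //; move: fp0; apply: contra_neq => ->.
exact: linear0.
Qed.

Lemma pos_index_iso (vT wT : vectType R) (D : vT -> Prop) q (D' : wT -> Prop) q'
  (f : 'Hom(vT, wT)) (h : wT -> vT) : D 0 -> cancel f h -> cancel h f ->
  (forall x, D x <-> D' (f x)) -> (forall x, q x = q' (f x)) ->
  pos_index D q = pos_index D' q'.
Proof.
move=> D0 fK hK fD fq; have lh : linear h.
  by move=> a y z; rewrite -{1}(hK y) -{1}(hK z) -linearP fK.
apply/eqP; rewrite eqn_leq; apply/andP; split.
  by apply: (pos_index_leq_inj D0 (can_inj fK)) => x; [move/fD | rewrite fq].
apply: (pos_index_leq_inj (f := hom_of lh)) => [|y y'|y|y _]; rewrite ?hom_ofE.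
- by rewrite -(linear0 f) -fD.
- by move/(congr1 f); rewrite !hK.
- by rewrite fD hK.
- by rewrite fq hK.
Qed.

Section SignatureTheory.
Variable vT : vectType R.
Implicit Types (D : vT -> Prop) (q : vT -> R).

Lemma eq_signature D q q' : (forall x, D x -> q x = q' x) -> signature D q = signature D q'.
Proof.
move=> qq'; rewrite /signature (@eq_pos_index _ D q q') => [|x Dx]; last by rewrite qq'.
by rewrite (@eq_pos_index _ D (fun x => - q x) (fun x => - q' x)) // => x Dx; rewrite qq'.
Qed.

Lemma signature_eq0 D q : D 0 -> (forall x, D x -> q x = 0) -> signature D q = 0.
Proof.
by move=> D0 q0; rewrite /signature !pos_index_eq0 // => x Dx; rewrite q0 ?oppr0.
Qed.

Lemma signatureZ D q c : D 0 -> signature D (fun x => c * q x) = sgz c * signature D q.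
Proof.
move=> D0; have [c0|c0|->] := ltrgtP c 0; last first.
- by rewrite sgz0 mul0r; apply: signature_eq0 => // x _; rewrite mul0r.
- rewrite gtr0_sgz // mul1r /signature.
  rewrite (@eq_pos_index _ D (fun x => c * q x) q) => [|x _]; last by rewrite pmulr_rgt0.
  by rewrite (@eq_pos_index _ D (fun x => - (c * q x)) (fun x => - q x)) // => x _;
    rewrite -mulrN pmulr_rgt0.
rewrite ltr0_sgz // mulN1r /signature opprB.
rewrite (@eq_pos_index _ D (fun x => c * q x) (fun x => - q x)) => [|x _].
  by rewrite (@eq_pos_index _ D (fun x => - (c * q x)) q) // => x _;
    rewrite -mulNr pmulr_rgt0 ?oppr_gt0.
by rewrite -mulrNN pmulr_rgt0 ?oppr_gt0.
Qed.

End SignatureTheory.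

Lemma signature_iso (vT wT : vectType R) (D : vT -> Prop) q (D' : wT -> Prop) q'
  (f : 'Hom(vT, wT)) (h : wT -> vT) : D 0 -> cancel f h -> cancel h f ->
  (forall x, D x <-> D' (f x)) -> (forall x, q x = q' (f x)) ->
  signature D q = signature D' q'.
Proof.
move=> D0 fK hK fD fq; rewrite /signature (pos_index_iso D0 fK hK fD fq).
by rewrite (pos_index_iso (q' := fun y => - q' y) D0 fK hK fD) // => x; rewrite fq.
Qed.

Lemma signature_orthogonal_sum (vT vT1 vT2 : vectType R) (D : vT -> Prop) q
  (b1 : vT1 -> vT1 -> R) (b2 : vT2 -> vT2 -> R) (D1 : vT1 -> Prop) (D2 : vT2 -> Prop)
  (f : 'Hom(vT, (vT1 * vT2)%type)) (h : vT1 * vT2 -> vT) :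
  bilinear_form b1 -> bilinear_form b2 -> subspace_pred D1 -> subspace_pred D2 ->
  D 0 -> cancel f h -> cancel h f ->
  (forall x, D x <-> D1 (f x).1 /\ D2 (f x).2) ->
  (forall x, q x = b1 (f x).1 (f x).1 + b2 (f x).2 (f x).2) ->
  signature D q = signature D1 (fun x => b1 x x) + signature D2 (fun x => b2 x x).
Proof.
move=> hb1 hb2 hD1 hD2 D0 fK hK fD fq.
have hbN (vU : vectType R) (b : vU -> vU -> R) :
    bilinear_form b -> bilinear_form (fun x y => - b x y).
  by move=> [hl hr]; split=> a x y z; rewrite ?hl ?hr; ring.
pose Dsum (y : vT1 * vT2) := D1 y.1 /\ D2 y.2.
rewrite /signature (pos_index_iso (D' := Dsum) (q' := fun y => b1 y.1 y.1 + b2 y.2 y.2)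
  D0 fK hK fD fq).
rewrite (pos_index_iso (D' := Dsum) (q' := fun y => - b1 y.1 y.1 + - b2 y.2 y.2) D0 fK hK fD);
  last by move=> x /=; rewrite fq opprD.
rewrite pos_index_sum // (pos_index_sum (b1 := fun x y => - b1 x y) (b2 := fun x y => - b2 x y)) //;
  try exact: hbN.
by rewrite !PoszD; ring.
Qed.

End Signature.

Section MatrixForms.
Variable R : realType.

Definition mx_form n (A : 'M[R]_n) (x y : 'rV[R]_n) : R := (x *m A *m y^T) 0 0.

Definition mx_signature n (A : 'M[R]_n) : int :=
  signature (fun _ : 'rV[R]_n => True) (fun x => mx_form A x x).

Lemma bilinear_mx_form n (A : 'M[R]_n) : bilinear_form (mx_form A).
Proof.
split=> a x y z; rewrite /mx_form; first by rewrite !mulmxDl -!scalemxAl !mxE.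
by rewrite linearD linearZ /= mulmxDr -scalemxAr !mxE.
Qed.

Lemma mx_form_delta n (A : 'M[R]_n) i j : mx_form A (delta_mx 0 i) (delta_mx 0 j) = A i j.
Proof. by rewrite /mx_form trmx_delta -rowE -colE !mxE. Qed.

Lemma mx_form_row m p n (A : 'M[R]_n) (X : 'M[R]_(m, n)) (Y : 'M[R]_(p, n)) i j :
  (X *m A *m Y^T) i j = mx_form A (row i X) (row j Y).
Proof. by rewrite /mx_form -row_mul !mxE; apply: eq_bigr => l _; rewrite !mxE. Qed.

Lemma mx_signature0 n : mx_signature (0 : 'M[R]_n) = 0.
Proof. by apply: signature_eq0 => // x _; rewrite /mx_form mulmx0 mul0mx mxE. Qed.

Lemma mx_signature_congr n (A T : 'M[R]_n) : T \in unitmx ->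
  mx_signature (T *m A *m T^T) = mx_signature A.
Proof.
move=> hT; have lf : linear (fun x : 'rV[R]_n => x *m invmx T).
  by move=> a x y; rewrite mulmxDl scalemxAl.
symmetry; apply: (signature_iso (f := hom_of lf) (h := mulmx^~ T)) => // x;
  rewrite hom_ofE ?mulmxKV ?mulmxK //.
by rewrite /mx_form trmx_mul !mulmxA mulmxKV // -(mulmxA _ T^T) -trmx_mul mulVmx // trmx1 mulmx1.
Qed.

Lemma mx_signature_block m n (A : 'M[R]_m) (C : 'M[R]_n) :
  mx_signature (block_mx A 0 0 C) = mx_signature A + mx_signature C.
Proof.
have lf : linear (fun x : 'rV[R]_(m + n) => (lsubmx x, rsubmx x)).
  by move=> a x y; rewrite !linearD !linearZ.
apply: (signature_orthogonal_sum (f := hom_of lf) (h := fun y => row_mx y.1 y.2))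
  => //; try exact: bilinear_mx_form.
- by move=> x; rewrite hom_ofE hsubmxK.
- by case=> y1 y2; rewrite hom_ofE row_mxKl row_mxKr.
- move=> x; rewrite hom_ofE /mx_form -{1}[x]hsubmxK mul_row_block !mulmx0 addr0 add0r.
  by rewrite -{3}[x]hsubmxK tr_row_mx mul_row_col mxE.
Qed.

Lemma mx_signature_scalar (d : R) : mx_signature (d%:M : 'M[R]_1) = sgz d.
Proof.
rewrite /mx_signature (eq_signature (q' := fun x : 'rV[R]_1 => d * (x 0 0 * x 0 0))); last first.
  by move=> x _; rewrite /mx_form mul_mx_scalar -scalemxAl !mxE big_ord1 !mxE.
rewrite signatureZ // /signature (pos_index_eq0 (q := fun x : 'rV[R]_1 => - (x 0 0 * x 0 0)))
  => // [|x _]; last by rewrite oppr_le0 -expr2 sqr_ge0.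
suff -> : pos_index (fun _ : 'rV[R]_1 => True) (fun x => x 0 0 * x 0 0) = 1%N by rewrite mulr1.
apply/eqP; rewrite eqn_leq; apply/andP; split.
  by rewrite -[X in (_ <= X)%N](dim_rV R 1) pos_index_leq_dimv.
rewrite -[X in (X <= _)%N](dim_rV R 1); apply: dim_leq_pos_index; split=> // x _ nx.
have x00 : x 0 0 != 0 by apply: contra nx => /eqP x0; apply/eqP/rowP => i; rewrite ord1 x0 mxE.
by rewrite lt0r mulf_neq0 //= -expr2 sqr_ge0.
Qed.

Lemma sym_mx_anisotropic n (A : 'M[R]_n) : A^T = A -> A != 0 ->
  exists v, mx_form A v v != 0.
Proof.
move=> sA nA; have [//|iso] := pselect (exists v, mx_form A v v != 0).
have q0 v : mx_form A v v = 0 by apply/eqP/negPn/negP => nv; apply: iso; exists v.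
case/negP: nA; apply/eqP/matrixP => i j; rewrite mxE.
have := q0 (delta_mx 0 i + delta_mx 0 j).
have hA := bilinear_mx_form A.
rewrite (formDl hA) !(formDr hA) !q0 !mx_form_delta.
have -> : A j i = A i j by rewrite -{1}sA mxE.
lra.
Qed.

Lemma congr_corner_neq0 n (A : 'M[R]_(1 + n)) : A^T = A -> A != 0 ->
  exists2 T, T \in unitmx & (T *m A *m T^T) 0 0 != 0.
Proof.
move=> sA nA; have [v qv] := sym_mx_anisotropic sA nA.
have v0 : v != 0 by apply: contra qv => /eqP ->; rewrite /mx_form !mul0mx mxE.
exists (row_ebase v); first exact: row_ebase_unit.
have pid1 : (pid_mx 1 : 'M[R]_(1, 1 + n)) = delta_mx 0 0.
  by apply/matrixP => i j; rewrite !mxE ord1 /= andbT eq_sym.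
have ev : v = col_ebase v 0 0 *: row 0 (row_ebase v).
  have := mulmx_ebase v; rewrite rank_rV v0 /= pid1 -mulmxA -rowE.
  by rewrite {1}[col_ebase v]mx11_scalar mul_scalar_mx => ->.
have hA := bilinear_mx_form A.
rewrite mx_form_row; apply: contraNneq qv => q0.
by rewrite ev (formZl hA) (formZr hA) q0 !mulr0.
Qed.

(* Gaussian elimination of the first row and column against the pivot [A 0 0]. *)
Lemma sym_mx_schur n (A : 'M[R]_(1 + n)) : A^T = A -> A 0 0 != 0 ->
  exists E (C : 'M[R]_n),
    [/\ E \in unitmx, C^T = C & E *m A *m E^T = block_mx (A 0 0)%:M 0 0 C].
Proof.
move=> sA d0; set d := A 0 0.
pose ur := ursubmx A; pose dl := dlsubmx A; pose dr := drsubmx A.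
have ul : ulsubmx A = d%:M.
  by rewrite [ulsubmx A]mx11_scalar mxE; congr _%:M; rewrite mxE; congr (A _ _); apply/val_inj.
have hdl : dl^T = ur by rewrite /dl trmx_dlsub sA.
have hur : ur^T = dl by rewrite -hdl trmxK.
have hdr : dr^T = dr by rewrite /dr trmx_drsub sA.
pose E : 'M[R]_(1 + n) := block_mx 1%:M 0 (- (d^-1 *: dl)) 1%:M.
exists E, (dr - d^-1 *: (dl *m ur)); split.
- by rewrite unitmxE det_lblock !det1 mulr1 unitr1.
- by rewrite linearB linearZ /= trmx_mul hdr hdl hur.
rewrite -[A]submxK ul -/ur -/dl -/dr /E tr_block_mx !trmx0 tr_scalar_mx !mulmx_block.
rewrite !mul1mx !mul0mx !mulmx1 !mulmx0 ?addr0 ?add0r !tr_scalar_mx !mulmx1.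
have e1 : - (d^-1 *: dl) *m d%:M + dl = 0.
  by rewrite mul_mx_scalar scalerN scalerA mulfV // scale1r addNr.
rewrite e1 mul0mx add0r; congr block_mx.
- by rewrite mul_scalar_mx linearN linearZ /= hdl scalerN scalerA mulfV // scale1r addNr.
- by rewrite mulNmx -scalemxAl addrC.
Qed.

Lemma sym_mx_congr_ind (P : forall n, 'M[R]_n -> Prop) :
  (forall n, P n 0) ->
  (forall n (A T : 'M[R]_n), T \in unitmx -> P n (T *m A *m T^T) -> P n A) ->
  (forall n d (C : 'M[R]_n), C^T = C -> P n C -> P (1 + n)%N (block_mx d%:M 0 0 C)) ->
  forall n (A : 'M[R]_n), A^T = A -> P n A.
Proof.
move=> P0 Pcongr Pblock; elim=> [|n IH] A sA; first by rewrite [A]flatmx0.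
have [->|nA] := eqVneq A 0; first exact: P0.
have [T hT cT] := congr_corner_neq0 sA nA.
have sTA : (T *m A *m T^T)^T = T *m A *m T^T by rewrite !trmx_mul trmxK sA mulmxA.
have [E [C [hE sC eC]]] := sym_mx_schur sTA cT.
apply: (Pcongr _ _ (E *m T)); first by rewrite unitmx_mul hE hT.
have -> : E *m T *m A *m (E *m T)^T = E *m (T *m A *m T^T) *m E^T.
  by rewrite trmx_mul !mulmxA.
by rewrite eC; apply: Pblock => //; apply: IH.
Qed.

End MatrixForms.

Section TensorForm.
Variables (R : realType) (n : nat) (J : 'M[R]_n).

Definition tensor_form r (A : 'M[R]_r) (X Y : 'M[R]_(r, n)) : R :=
  \tr (A^T *m X *m J *m Y^T).

Lemma tensor_formE r (A : 'M[R]_r) X Y :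
  tensor_form A X Y = \sum_(j < r) \sum_(l < r) A j l * mx_form J (row j X) (row l Y).
Proof.
rewrite /tensor_form -!mulmxA /mxtrace; under eq_bigr do rewrite mxE.
rewrite exchange_big; apply: eq_bigr => j _; apply: eq_bigr => l _.
by rewrite [A^T _ _]mxE mulmxA mx_form_row.
Qed.

Lemma bilinear_tensor_form r (A : 'M[R]_r) : bilinear_form (tensor_form A).
Proof.
split=> a X Y Z; rewrite /tensor_form.
  by rewrite mulmxDr -scalemxAr !mulmxDl -!scalemxAl mxtraceD mxtraceZ.
by rewrite linearD linearZ /= mulmxDr -scalemxAr mxtraceD mxtraceZ.
Qed.

Lemma tensor_form0 r (X Y : 'M[R]_(r, n)) : tensor_form 0 X Y = 0.
Proof. by rewrite /tensor_form trmx0 !mul0mx mxtrace0. Qed.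

Lemma tensor_form_congr r s (M : 'M[R]_s) (B : 'M[R]_(s, r)) X Y :
  tensor_form M (B *m X) (B *m Y) = tensor_form (B^T *m M *m B) X Y.
Proof. by rewrite /tensor_form !trmx_mul trmxK !mulmxA mxtrace_mulC !mulmxA. Qed.

Lemma tensor_form_block m r (A : 'M[R]_m) (C : 'M[R]_r) (X Y : 'M[R]_(m + r, n)) :
  tensor_form (block_mx A 0 0 C) X Y =
  tensor_form A (usubmx X) (usubmx Y) + tensor_form C (dsubmx X) (dsubmx Y).
Proof.
rewrite /tensor_form -{1}[X]vsubmxK -{1}[Y]vsubmxK tr_block_mx !trmx0.
by rewrite mul_block_col !mul0mx addr0 add0r mul_col_mx tr_col_mx mul_col_row mxtrace_block.
Qed.

Lemma tensor_form_scalar (d : R) (x y : 'rV[R]_n) :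
  tensor_form (d%:M : 'M[R]_1) x y = d * mx_form J x y.
Proof.
by rewrite /tensor_form tr_scalar_mx mul_scalar_mx -!scalemxAl mxtraceZ /mxtrace big_ord1.
Qed.

End TensorForm.

Section MaslovForm.
Variable R : realType.

Definition maslov_form (vT : vectType R) (w : vT -> vT -> R) (x y : vT * vT * vT) : R :=
  w x.1.1 y.1.2 + w x.1.2 y.2 + w x.2 y.1.1.

Definition maslov_dom (vT : vectType R) (V1 V2 V3 : vT -> Prop) (x : vT * vT * vT) : Prop :=
  [/\ V1 x.1.1, V2 x.1.2 & V3 x.2].

Definition triple_map (vT wT : vectType R) (f : vT -> wT) (x : vT * vT * vT) : wT * wT * wT :=
  (f x.1.1, f x.1.2, f x.2).

Lemma bilinear_maslov_form (vT : vectType R) (w : vT -> vT -> R) :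
  bilinear_form w -> bilinear_form (maslov_form w).
Proof. by move=> [wl wr]; split=> a x y z; rewrite /maslov_form /= ?wl ?wr; ring. Qed.

Lemma subspace_pred_maslov_dom (vT : vectType R) (V1 V2 V3 : vT -> Prop) :
  subspace_pred V1 -> subspace_pred V2 -> subspace_pred V3 ->
  subspace_pred (maslov_dom V1 V2 V3).
Proof.
move=> [V10 V1D] [V20 V2D] [V30 V3D]; split=> [|a x y [? ? ?] [? ? ?]]; first by split.
by split; [exact: V1D | exact: V2D | exact: V3D].
Qed.

Lemma linear_triple_map (vT wT : vectType R) (f : vT -> wT) :
  linear f -> linear (triple_map f).
Proof. by move=> lf a x y; rewrite /triple_map /= !lf. Qed.

End MaslovForm.

Section MaslovTensor.
Variables (R : realType) (n : nat) (J : 'M[R]_n) (L1 L2 L3 : {vspace 'rV[R]_n}).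

Definition rows_in (L : {vspace 'rV[R]_n}) r (X : 'M[R]_(r, n)) : Prop :=
  forall j, row j X \in L.

Lemma subspace_pred_rows_in L r : subspace_pred (@rows_in L r).
Proof.
split=> [j|a X Y hX hY j]; first by rewrite row0 mem0v.
by rewrite linearD linearZ /= memvD // memvZ.
Qed.

Lemma rows_in_mul L r s (B : 'M[R]_(s, r)) X : rows_in L X -> rows_in L (B *m X).
Proof. by move=> hX j; rewrite row_mul mulmx_sum_row memv_suml // => i _; rewrite memvZ. Qed.

Lemma rows_in_vsubmx L m r (X : 'M[R]_(m + r, n)) :
  rows_in L X <-> rows_in L (usubmx X) /\ rows_in L (dsubmx X).
Proof.
split=> [hX|[hu hd] j]; first by split=> j; rewrite ?row_usubmx ?row_dsubmx.
by rewrite -[X]vsubmxK; case: (split_ordP j) => k ->; rewrite ?rowKu ?rowKd.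
Qed.

Lemma rows_in_rV L (x : 'rV[R]_n) : rows_in L x <-> x \in L.
Proof. by split=> [/(_ 0)|xL j]; rewrite row_id. Qed.

Definition maslov_tensor r (A : 'M[R]_r) : int :=
  maslov (tensor_form J A) (@rows_in L1 r) (@rows_in L2 r) (@rows_in L3 r).

Lemma maslov_tensor_dom0 r : maslov_dom (@rows_in L1 r) (@rows_in L2 r) (@rows_in L3 r) 0.
Proof. by split; apply: (subspace_pred_rows_in _ _).1. Qed.

Lemma maslov_tensor0 r : maslov_tensor (0 : 'M[R]_r) = 0.
Proof.
by apply: signature_eq0 => [|x _]; [exact: maslov_tensor_dom0 | rewrite !tensor_form0 !addr0].
Qed.

Lemma maslov_tensor_congr r (A T : 'M[R]_r) : T \in unitmx ->
  maslov_tensor (T *m A *m T^T) = maslov_tensor A.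
Proof.
move=> hT; pose B := (invmx T)^T.
have TB : T^T *m B = 1%:M by rewrite -trmx_mul mulVmx // trmx1.
have BT : B *m T^T = 1%:M by rewrite -trmx_mul mulmxV // trmx1.
have BAB : B^T *m (T *m A *m T^T) *m B = A.
  by rewrite trmxK !mulmxA mulVmx // mul1mx -mulmxA TB mulmx1.
have lB : linear (mulmx B : 'M[R]_(r, n) -> _) by move=> a X Y; rewrite mulmxDr -scalemxAr.
symmetry; apply: (signature_iso (f := hom_of (linear_triple_map lB))
  (h := triple_map (mulmx T^T))) => [|[[X1 X2] X3]|[[X1 X2] X3]|[[X1 X2] X3]|[[X1 X2] X3]];
  rewrite ?hom_ofE /triple_map /=.
- exact: maslov_tensor_dom0.
- by rewrite !mulmxA TB !mul1mx.
- by rewrite !mulmxA BT !mul1mx.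
- have BK (X : 'M[R]_(r, n)) : X = T^T *m (B *m X) by rewrite mulmxA TB mul1mx.
  split=> -[h1 h2 h3]; split; try exact: rows_in_mul.
  + by rewrite (BK X1); apply: rows_in_mul.
  + by rewrite (BK X2); apply: rows_in_mul.
  + by rewrite (BK X3); apply: rows_in_mul.
- by rewrite !tensor_form_congr BAB.
Qed.

Lemma maslov_tensor_block m r (A : 'M[R]_m) (C : 'M[R]_r) :
  maslov_tensor (block_mx A 0 0 C) = maslov_tensor A + maslov_tensor C.
Proof.
pose M3 k := ('M[R]_(k, n) * 'M[R]_(k, n) * 'M[R]_(k, n))%type.
have lf : linear (fun X : M3 (m + r)%N => (triple_map usubmx X, triple_map dsubmx X)).
  by move=> a X Y; rewrite /triple_map /= !linearD !linearZ.
pose h (Y : M3 m * M3 r) : M3 (m + r)%N :=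
  (col_mx Y.1.1.1 Y.2.1.1, col_mx Y.1.1.2 Y.2.1.2, col_mx Y.1.2 Y.2.2).
apply: (signature_orthogonal_sum (f := hom_of lf) (h := h)
  (b1 := maslov_form (tensor_form J A)) (b2 := maslov_form (tensor_form J C))
  (D1 := maslov_dom (@rows_in L1 m) (@rows_in L2 m) (@rows_in L3 m))
  (D2 := maslov_dom (@rows_in L1 r) (@rows_in L2 r) (@rows_in L3 r)))
  => [|||||[[X1 X2] X3]|Y|[[X1 X2] X3]|[[X1 X2] X3]]; rewrite ?hom_ofE /triple_map /=.
1,2: exact/bilinear_maslov_form/bilinear_tensor_form.
1,2: by apply: subspace_pred_maslov_dom; apply: subspace_pred_rows_in.
- exact: maslov_tensor_dom0.
- by rewrite /h /= !vsubmxK.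
- by rewrite !col_mxKu !col_mxKd; case: Y => [[[? ?] ?] [[? ?] ?]].
- split=> [[/rows_in_vsubmx [? ?] /rows_in_vsubmx [? ?] /rows_in_vsubmx [? ?]]|].
    by split; split.
  by case=> -[? ? ?] [? ? ?]; split; apply/rows_in_vsubmx; split.
- by rewrite /maslov_form !tensor_form_block; ring.
Qed.

Lemma maslov_tensor_scalar (d : R) : maslov_tensor (d%:M : 'M[R]_1) =
  sgz d * maslov (mx_form J) (fun x => x \in L1) (fun x => x \in L2) (fun x => x \in L3).
Proof.
rewrite -signatureZ; last by split; apply: mem0v.
have lid : linear (fun x : 'rV[R]_n * 'rV[R]_n * 'rV[R]_n => x) by [].
apply: (signature_iso (f := hom_of lid) (h := id)) => [|x|x|x|x]; rewrite ?hom_ofE //.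
- exact: maslov_tensor_dom0.
- by split=> -[h1 h2 h3]; split; apply/rows_in_rV.
- by rewrite /= !tensor_form_scalar; ring.
Qed.

Lemma maslov_tensor_signature r (A : 'M[R]_r) : A^T = A ->
  maslov_tensor A =
  mx_signature A * maslov (mx_form J) (fun x => x \in L1) (fun x => x \in L2) (fun x => x \in L3).
Proof.
move: r A; apply: sym_mx_congr_ind => [r|r A T hT|r d C _ IH].
- by rewrite maslov_tensor0 mx_signature0 mul0r.
- by rewrite maslov_tensor_congr // mx_signature_congr.
- rewrite maslov_tensor_block mx_signature_block maslov_tensor_scalar mx_signature_scalar.
  by rewrite IH -mulrDl.
Qed.

End MaslovTensor.

Definition symplectic_mx (R : realType) (g : nat) : 'M[R]_(g + g) := block_mx 0 1%:M (- 1%:M) 0.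

Lemma omegaSigmaE (R : realType) g (x y : H1 R g) :
  omegaSigma x y = mx_form (symplectic_mx R g) x y.
Proof.
rewrite /mx_form; have -> : x *m symplectic_mx R g = row_mx (- rsubmx x) (lsubmx x).
  by rewrite -{1}[x]hsubmxK mul_row_block !mulmx0 !mulmxN !mulmx1 !add0r addr0.
rewrite -{2}[y]hsubmxK tr_row_mx mul_row_col mxE /omegaSigma.
by rewrite !mxE addrC -big_split /=; apply: eq_bigr => i _; rewrite !mxE; ring.
Qed.

Lemma omegaSigmaK_tensor (R : realType) g r (K : 'M[int]_r) (X Y : H1t R g r) :
  omegaSigmaK K X Y = tensor_form (symplectic_mx R g) (Kreal R K) X Y.
Proof.
by rewrite tensor_formE; apply: eq_bigr => j _; apply: eq_bigr => l _; rewrite omegaSigmaE.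
Qed.

Theorem lemma2p19 (R : realType) (g r : nat) (K : 'M[int]_r)
  (Ksym : K^T = K)
  (Keven : forall i : 'I_r, (2 %| K i i)%Z)
  (Knondeg : \det K != 0)
  (L1 L2 L3 : {vspace H1 R g})
  (hL1 : lagrangian L1) (hL2 : lagrangian L2) (hL3 : lagrangian L3) :
  muK K L1 L2 L3 = sigmaK R K * muSigma L1 L2 L3.
Proof.
have sK : (Kreal R K)^T = Kreal R K by rewrite /Kreal map_trmx Ksym.
have -> : muK K L1 L2 L3 = maslov_tensor (symplectic_mx R g) L1 L2 L3 (Kreal R K).
  by apply: eq_signature => x _; rewrite /= !omegaSigmaK_tensor.
have -> : muSigma L1 L2 L3 = maslov (mx_form (symplectic_mx R g))
    (fun x => x \in L1) (fun x => x \in L2) (fun x => x \in L3).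
  by apply: eq_signature => x _; rewrite /= !omegaSigmaE.
exact: maslov_tensor_signature.
Qed.
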